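(* Let $\mathfrak{g}=\mathfrak{gl}(p,q)$, $k\ge1$, and let all $X_i\in\mathfrak g$ be homogeneous. Then: (a) $P_{2k+1}(X_1,\ldots,X_{2k+1})=(2k+1)\,B(\mathcal P_{2k}(X_1,\ldots,X_{2k})\mid X_{2k+1})$; $\Lambda_{2k}(X_1,\ldots,X_{2k})=0$; and $\Lambda_{2k+1}(X_1,\ldots,X_{2k+1})=(2k+1)\,B(\mathcal A_{2k}(X_1,\ldots,X_{2k})\mid X_{2k+1})$. (b) $\displaystyle\sum_{\sigma\in\mathfrak S_{2k}}\epsilon(\sigma)\epsilon(\sigma,\mathcal X)[X_{\sigma(1)},X_{\sigma(2)}]\cdots[X_{\sigma(2k-1)},X_{\sigma(2k)}]=2^k\mathcal A_{2k}(X_1,\ldots,X_{2k})$. (c) For each $j$ with $0\le j\le k$, $\displaystyle\sum_{\sigma\in\mathfrak S_{2k+1}}\epsilon(\sigma)\epsilon(\sigma,\mathcal X)[X_{\sigma(1)},X_{\sigma(2)}]\cdots[X_{\sigma(2j-1)},X_{\sigma(2j)}]\,X_{\sigma(2j+1)}\,[X_{\sigma(2j+2)},X_{\sigma(2j+3)}]\cdots[X_{\sigma(2k)},X_{\sigma(2k+1)}]=2^k\mathcal A_{2k+1}(X_1,\ldots,X_{2k+1})$.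
   Context: $\mathfrak{gl}(p,q)=\mathrm{End}(V)$ for a $\mathbb Z_2$-graded complex vector space $V=V_{\bar0}\oplus V_{\bar1}$ with $\dim V_{\bar0}=p$, $\dim V_{\bar1}=q$; homogeneous elements have degrees denoted by lower-case letters, products are compositions, and $[X,Y]=XY-(-1)^{xy}YX$. The super trace is $\mathrm{str}\begin{pmatrix}a&b\\c&d\end{pmatrix}=\mathrm{tr}(a)-\mathrm{tr}(d)$ and $B(Z\mid T)=\mathrm{str}(ZT)$. For $\mathcal X=(X_1,\dots,X_m)$ and $\sigma\in\mathfrak S_m$, $\epsilon(\sigma)$ is the sign of $\sigma$ and $\epsilon(\sigma,\mathcal X)=(-1)^K$ with $K$ the number of pairs $i<j$ such that $\sigma(i)>\sigma(j)$ and $X_{\sigma(i)},X_{\sigma(j)}$ are both odd. Define $\mathcal P_m(X_1,\dots,X_m)=\sum_{\sigma\in\mathfrak S_m}\epsilon(\sigma,\mathcal X)X_{\sigma(1)}\cdots X_{\sigma(m)}$, $\mathcal A_m(X_1,\dots,X_m)=\sum_{\sigma}\epsilon(\sigma)\epsilon(\sigma,\mathcal X)X_{\sigma(1)}\cdots X_{\sigma(m)}$, $P_m=\mathrm{str}\circ\mathcal P_m$, $\Lambda_m=\mathrm{str}\circ\mathcal A_m$. In (c), for $j=0$ there are no brackets before $X_{\sigma(1)}$ and for $j=k$ none after $X_{\sigma(2k+1)}$. *)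

From mathcomp Require Import all_boot all_algebra all_fingroup.
From mathcomp Require Import reals complex.
Set Implicit Arguments. Unset Strict Implicit. Unset Printing Implicit Defensive.
Import GRing.Theory.
Local Open Scope ring_scope.

(* gl(p,q) = End(V), V = V_0 (+) V_1, dim V_0 = p, dim V_1 = q, realised as
   (p+q) x (p+q) matrices over the complex numbers C = R[i] (R : realType),
   in the block form ( a b ; c d ) with a : p x p, d : q x q. *)

Section GL.
Variable (C : fieldType) (p q : nat).
Notation M := 'M[C]_(p + q).

(* homogeneous of degree 0 (even): off-diagonal blocks vanish;
   homogeneous of degree 1 (odd): diagonal blocks vanish *)
Definition homog (x : bool) (A : M) : Prop :=
  if x then ulsubmx A = 0 /\ drsubmx A = 0
  else ursubmx A = 0 /\ dlsubmx A = 0.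

Definition str (A : M) : C := \tr (ulsubmx A) - \tr (drsubmx A).
Definition Bform (Z T : M) : C := str (Z *m T).

Definition sbr (x y : bool) (X Y : M) : M :=
  X *m Y - ((-1) ^+ (x && y)) *: (Y *m X).

Definition mprod (s : seq M) : M := foldr (@mulmx C _ _ _) 1%:M s.

Definition oddinv (m : nat) (d : 'I_m -> bool) (s : 'S_m) : nat :=
  \sum_(i < m) \sum_(j < m) ((i < j)%N && (s j < s i)%N && d (s i) && d (s j)).
Definition eps_sX (m : nat) (d : 'I_m -> bool) (s : 'S_m) : C :=
  (-1) ^+ oddinv d s.
Definition eps (m : nat) (s : 'S_m) : C := (-1) ^+ odd_perm s.

Definition permseq (m : nat) (X : 'I_m -> M) (s : 'S_m) : seq M :=
  [seq X (s i) | i <- enum 'I_m].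
Definition permseqd (m : nat) (d : 'I_m -> bool) (X : 'I_m -> M) (s : 'S_m)
  : seq (bool * M) := [seq (d (s i), X (s i)) | i <- enum 'I_m].

Definition calP (m : nat) (d : 'I_m -> bool) (X : 'I_m -> M) : M :=
  \sum_(s : 'S_m) eps_sX d s *: mprod (permseq X s).
Definition calA (m : nat) (d : 'I_m -> bool) (X : 'I_m -> M) : M :=
  \sum_(s : 'S_m) (eps s * eps_sX d s) *: mprod (permseq X s).
Definition Pm (m : nat) (d : 'I_m -> bool) (X : 'I_m -> M) : C := str (calP d X).
Definition Lm (m : nat) (d : 'I_m -> bool) (X : 'I_m -> M) : C := str (calA d X).

Fixpoint brpairs (s : seq (bool * M)) : seq M :=
  match s with
  | (x, X) :: (y, Y) :: t => sbr x y X Y :: brpairs t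
  | _ => [::]
  end.

(* [X_s1,X_s2]...[X_s(2j-1),X_s(2j)] X_s(2j+1) [X_s(2j+2),X_s(2j+3)]...[..] *)
Definition brmixed (j : nat) (s : seq (bool * M)) : M :=
  mprod (brpairs (take j.*2 s)) *m (nth (false, 0) s j.*2).2
    *m mprod (brpairs (drop j.*2.+1 s)).

End GL.
Arguments eps {C m} s.
Arguments eps_sX {C m} d s.
Arguments oddinv {m} d s.

From mathcomp Require Import all_boot all_algebra all_fingroup.
From mathcomp Require Import reals complex.
From mathcomp Require Import zify ring.
Set Implicit Arguments. Unset Strict Implicit. Unset Printing Implicit Defensive.
Import GRing.Theory.
Local Open Scope ring_scope.

(* The supertrace is supersymmetric: str (A B) = (-1)^(ab) str (B A) for homogeneous A, B.
   Hence moving the first factor of the word X_s(1) ... X_s(m) to its end, i.e. replacing s by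
   rot_perm * s, leaves eps(s, X) str (X_s(1) ... X_s(m)) unchanged, while eps(s) changes by
   eps(rot_perm) = (-1)^(m-1).  Grouping the permutations s by the position r with s(r) = m,
   every group therefore contributes the same as the group of permutations fixing m, which is
   B(P_(m-1) | X_m), resp. B(A_(m-1) | X_m): this gives (a), and Lambda_m = - Lambda_m for m even.
   For (b) and (c), expand a super bracket [X_a, X_b] = X_a X_b - (-1)^(ab) X_b X_a.  The second
   term is the word of s composed with the adjacent transposition exchanging the two positions,
   whose signs eps = -1 and eps(., X) = (-1)^(ab) cancel those of the bracket after reindexing;
   so each bracket just doubles the super-antisymmetrised sum. *)

Section Signs.
Variables (C : fieldType) (m : nat).
Local Notation sg b := ((-1 : C) ^+ (b : bool)).
Implicit Types (d : 'I_m -> bool) (s t : 'S_m).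

Lemma eps_sXE d s : eps_sX d s =
  \prod_(i < m) \prod_(j < m) sg ((i < j)%N && (s j < s i)%N && d (s i) && d (s j)).
Proof. by rewrite /eps_sX /oddinv -prodrXr; apply: eq_bigr => i _; rewrite -prodrXr. Qed.

Lemma prodr_ord_pairs (F : 'I_m -> 'I_m -> C) : (forall a, F a a = 1) ->
  \prod_(a < m) \prod_(b < m) F a b =
  \prod_(a < m) \prod_(b < m | (a < b)%N) (F a b * F b a).
Proof.
move=> F1; under [RHS]eq_bigr do rewrite big_split /=.
rewrite big_split /=; under eq_bigr => a _ do rewrite (bigID (fun b : 'I_m => (a < b)%N)) /=.
rewrite big_split /=; congr (_ * _).
under eq_bigr => a _ do rewrite big_mkcond.
rewrite exchange_big; apply: eq_bigr => b _; rewrite [RHS]big_mkcond; apply: eq_bigr => a _.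
by rewrite -leqNgt leq_eqVlt; case: ltngtP => // /val_inj ->; rewrite F1.
Qed.

Lemma eps_sXM d s t : eps_sX d (t * s)%g = eps_sX d s * eps_sX (fun i => d (s i)) t :> C.
Proof.
have reindexV (G : 'I_m -> 'I_m -> C) : \prod_(i < m) \prod_(j < m) G i j
    = \prod_(a < m) \prod_(b < m) G (t^-1 a)%g (t^-1 b)%g.
  rewrite (reindex_inj (@perm_inj _ t^-1%g)); apply: eq_bigr => a _.
  by rewrite (reindex_inj (@perm_inj _ t^-1%g)).
rewrite !eps_sXE reindexV [X in _ = _ * X]reindexV.
rewrite !prodr_ord_pairs => [|a|a|a]; rewrite ?ltnn //.
rewrite -big_split; apply: eq_bigr => a _.
rewrite -big_split; apply: eq_bigr => b ab /=.
have ba : (b < a)%N = false by rewrite ltnNge ltnW.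
rewrite !permM !permKV -!signr_addb ab ba /=; congr (_ ^+ _).
have a_neq_b (u : 'S_m) : nat_of_ord (u a) = u b -> False.
  by move=> /val_inj/perm_inj eab; rewrite eab ltnn in ab.
case: (d (s a)) (d (s b)) => [] []; rewrite ?andbF ?andbT //=.
by case: (ltngtP (s a) (s b)) => [||/a_neq_b] //;
  case: (ltngtP (t^-1 a)%g (t^-1 b)%g) => [||/a_neq_b].
Qed.

Lemma epsM s t : eps (t * s)%g = eps t * eps s :> C.
Proof. by rewrite /eps odd_permM signr_addb. Qed.

Lemma eps_tperm (i j : 'I_m) : i != j -> eps (tperm i j) = -1 :> C.
Proof. by move=> ij; rewrite /eps odd_tperm ij expr1. Qed.

Lemma eps_sX_tperm_adj d (i j : 'I_m) : j = i.+1 :> nat ->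
  eps_sX d (tperm i j) = sg (d i && d j).
Proof.
move=> ji; have ne (x y : 'I_m) : x <> y -> x <> y :> nat by move=> + /val_inj.
have only_ij (a b : 'I_m) :
    ((a < b)%N && (tperm i j b < tperm i j a)%N) = (a == i) && (b == j).
  rewrite -!val_eqE /=.
  by case: tpermP => [->|->|/ne ai /ne aj]; case: tpermP => [->|->|/ne bi /ne bj]; lia.
rewrite eps_sXE (bigD1 i) //= [X in _ * X]big1 ?mulr1; last first.
  by move=> a /negbTE ai; apply: big1 => b _; rewrite only_ij ai.
rewrite (bigD1 j) //= [X in _ * X]big1 ?mulr1; last first.
  by move=> b /negbTE bj; rewrite only_ij bj andbF.
by rewrite only_ij !eqxx tpermL tpermR andbC.
Qed.

Lemma prod_signr_andb (I : Type) (r : seq I) (b : I -> bool) (a : bool) :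
  \prod_(i <- r) sg (b i && a) = sg (a && \big[addb/false]_(i <- r) b i).
Proof.
elim: r => [|i r IH]; first by rewrite !big_nil andbF.
by rewrite !big_cons IH; case: a {IH}; rewrite /= ?andbF ?mulr1 ?andbT ?signr_addb.
Qed.

End Signs.

Section Supertrace.
Variables (C : fieldType) (p q : nat).
Local Notation M := 'M[C]_(p + q).
Local Notation sg b := ((-1 : C) ^+ (b : bool)).

Lemma strD (A B : M) : str (A + B) = str A + str B.
Proof. by rewrite /str /ulsubmx /drsubmx !linearD /=; ring. Qed.

Lemma strZ c (A : M) : str (c *: A) = c * str A.
Proof. by rewrite /str /ulsubmx /drsubmx !linearZ /=; ring. Qed.

Lemma str0 : str (0 : M) = 0.
Proof. by rewrite -(scale0r 0) strZ mul0r. Qed.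

Lemma str_sum (I : Type) (r : seq I) (P : pred I) (F : I -> M) :
  str (\sum_(i <- r | P i) F i) = \sum_(i <- r | P i) str (F i).
Proof. by apply: big_morph; [exact: strD | exact: str0]. Qed.

Lemma homog1 : homog false (1%:M : M).
Proof. by rewrite /homog scalar_mx_block block_mxKur block_mxKdl. Qed.

Lemma homogM x y (A B : M) : homog x A -> homog y B -> homog (x (+) y) (A *m B).
Proof.
rewrite /homog -[A]submxK -[B]submxK mulmx_block !block_mxKul !block_mxKur
  !block_mxKdl !block_mxKdr.
by case: x y => [] [] [-> ->] [-> ->]; rewrite !mul0mx !mulmx0 !addr0.
Qed.

Lemma homog_mprod (I : Type) (r : seq I) (x : I -> bool) (Y : I -> M) :
  (forall i, homog (x i) (Y i)) ->
  homog (\big[addb/false]_(i <- r) x i) (mprod [seq Y i | i <- r]).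
Proof.
move=> hY; elim: r => [|i r IH]; first by rewrite big_nil; exact: homog1.
by rewrite big_cons; apply: homogM.
Qed.

Lemma str_mulC x y (A B : M) : homog x A -> homog y B ->
  str (A *m B) = sg (x && y) * str (B *m A).
Proof.
rewrite /homog /str -[A]submxK -[B]submxK !mulmx_block !block_mxKul !block_mxKur
  !block_mxKdl !block_mxKdr !mxtraceD (mxtrace_mulC (ulsubmx B)) (mxtrace_mulC (ursubmx B))
  (mxtrace_mulC (dlsubmx B)) (mxtrace_mulC (drsubmx B)).
by case: x y => [] [] [-> ->] [-> ->]; rewrite ?mul0mx ?mulmx0 ?mxtrace0 /=; ring.
Qed.

Lemma mprod_rcons (L : seq M) (A : M) : mprod (rcons L A) = mprod L *m A.
Proof. by elim: L => [|B L /= ->]; rewrite /= ?mulmx1 ?mul1mx ?mulmxA. Qed.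

End Supertrace.

Section PermLift.
Variable n : nat.

Lemma lift_perm_inj (i j : 'I_n.+1) : injective (lift_perm i j).
Proof.
move=> t t' /permP eq_tt'; apply/permP => k.
by apply: (@lift_inj _ j); rewrite -!(lift_perm_lift i) eq_tt'.
Qed.

Implicit Types (s : 'S_n.+1) (i : 'I_n.+1).

Definition unlift_perm_fun s i (k : 'I_n) : 'I_n :=
  odflt k (unlift (s i) (s (lift i k))).

Lemma lift_unlift_perm_fun s i k : lift (s i) (unlift_perm_fun s i k) = s (lift i k).
Proof.
have neq : s i != s (lift i k) by rewrite (inj_eq perm_inj) neq_lift.
by have [k' eq_k' _] := unlift_some neq; rewrite /unlift_perm_fun eq_k' liftK.
Qed.

Lemma unlift_perm_fun_inj s i : injective (unlift_perm_fun s i).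
Proof.
move=> k k' /(congr1 (lift (s i))); rewrite !lift_unlift_perm_fun.
by move/perm_inj/lift_inj.
Qed.

Definition unlift_perm s i : 'S_n := perm (@unlift_perm_fun_inj s i).

Lemma unlift_permK s i : lift_perm i (s i) (unlift_perm s i) = s.
Proof.
apply/permP => k; case: (unliftP i k) => [k'|] ->; last by rewrite lift_perm_id.
by rewrite lift_perm_lift permE lift_unlift_perm_fun.
Qed.

Lemma sum_perm_fix (V : nmodType) (i j : 'I_n.+1) (F : 'S_n.+1 -> V) :
  \sum_(s : 'S_n.+1 | s i == j) F s = \sum_(t : 'S_n) F (lift_perm i j t).
Proof.
rewrite (reindex (lift_perm i j)) /=; last first.
  exists (unlift_perm^~ i) => [t _ | s /eqP sij]; last by rewrite -sij unlift_permK.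
  by apply: (@lift_perm_inj i j); have := unlift_permK (lift_perm i j t) i;
    rewrite lift_perm_id.
by apply: eq_bigl => t; rewrite lift_perm_id eqxx.
Qed.

End PermLift.

Section Rotation.
Variable n : nat.

(* The cyclic shift k |-> k + 1 (mod n + 1). *)
Definition rot_perm : 'S_n.+1 := lift_perm ord_max ord0 1.

Lemma rot_perm_max : rot_perm ord_max = ord0.
Proof. exact: lift_perm_id. Qed.

Lemma rot_perm_lift k : rot_perm (lift ord_max k) = lift ord0 k.
Proof. by rewrite lift_perm_lift perm1. Qed.

Lemma sum_perm_rot_invariant (V : nmodType) (F : 'S_n.+1 -> V) :
    (forall s, F (rot_perm * s)%g = F s) ->
  \sum_(s : 'S_n.+1) F s = (\sum_(t : 'S_n) F (lift_perm ord_max ord_max t)) *+ n.+1.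
Proof.
move=> F_rot; pose S r := \sum_(s : 'S_n.+1 | s r == ord_max) F s.
have S_rot r : S r = S (rot_perm r).
  rewrite /S (reindex_inj (mulgI rot_perm)); apply: eq_big => s; first by rewrite permM.
  by move=> _; rewrite F_rot.
have S_inord k : (k <= n)%N -> S (inord k) = S ord0.
  elim: k => [|k IH] lt_kn; first by rewrite (inord_val ord0).
  have -> : inord k.+1 = rot_perm (lift ord_max (Ordinal lt_kn)).
    by apply: val_inj; rewrite rot_perm_lift /= /bump inordK.
  rewrite -S_rot -IH ?(ltnW lt_kn) //; congr S; apply: val_inj.
  by rewrite /= /bump leqNgt lt_kn inordK // ltnW.
have S_const r : S r = S ord_max.
  by rewrite -(inord_val r) -(inord_val ord_max) !S_inord // -ltnS.
rewrite (partition_big (fun s : 'S_n.+1 => s^-1 ord_max)%g predT) //=.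
under eq_bigr => r _ do under eq_bigl => s do rewrite (can2_eq (permKV s) (permK s)) eq_sym.
by under eq_bigr do rewrite -/(S _) S_const; rewrite sumr_const card_ord /S sum_perm_fix.
Qed.

End Rotation.

Section CyclicSupertrace.
Variables (C : fieldType) (p q n : nat).
Local Notation M := 'M[C]_(p + q).
Local Notation sg b := ((-1 : C) ^+ (b : bool)).
Local Notation w := (widen_ord (leqnSn n)).

Lemma eps_rot_perm : eps (rot_perm n) = sg (odd n) :> C.
Proof. by rewrite /eps odd_lift_perm odd_perm1 /= !addbF. Qed.

Lemma widen_ord_lift k : w k = lift ord_max k.
Proof. by apply: val_inj; rewrite /= /bump leqNgt ltn_ord. Qed.

Lemma eps_sX_rot_perm (d : 'I_n.+1 -> bool) :
  eps_sX d (rot_perm n) = \prod_(k < n) sg (d (lift ord0 k) && d ord0) :> C.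
Proof.
rewrite eps_sXE big_ord_recr /= [X in _ * X]big1 ?mulr1; last first.
  by move=> b _; rewrite ltnNge -ltnS ltn_ord.
apply: eq_bigr => a _; rewrite big_ord_recr /= [X in X * _]big1 ?mul1r; last first.
  move=> b _; rewrite !widen_ord_lift !rot_perm_lift /= /bump /= !add1n ltnS.
  by case: ltngtP.
by rewrite widen_ord_lift rot_perm_lift rot_perm_max /= ltn_ord /bump leq0n add1n.
Qed.

Lemma permseq_rot (X : 'I_n.+1 -> M) s : permseq X (rot_perm n * s)%g = rot 1 (permseq X s).
Proof.
rewrite /permseq [in RHS]enum_ordSl [in LHS]enum_ordSr /= rot1_cons map_rcons -!map_comp.
rewrite permM rot_perm_max; congr rcons; apply: eq_map => k /=.
by rewrite permM widen_ord_lift rot_perm_lift.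
Qed.

Lemma eps_sX_str_rot d (X : 'I_n.+1 -> M) : (forall i, homog (d i) (X i)) -> forall s,
  eps_sX d (rot_perm n * s)%g * str (mprod (permseq X (rot_perm n * s)%g))
  = eps_sX d s * str (mprod (permseq X s)).
Proof.
move=> hX s; rewrite eps_sXM eps_sX_rot_perm permseq_rot /permseq enum_ordSl /=.
rewrite rot1_cons mprod_rcons -map_comp -mulrA; congr (_ * _).
have hY := homog_mprod (enum 'I_n) (fun k => hX (s (lift ord0 k))).
by rewrite (str_mulC (hX (s ord0)) hY) -prod_signr_andb big_enum.
Qed.

Lemma lift_perm_max_widen (t : 'S_n) k : lift_perm ord_max ord_max t (w k) = w (t k).
Proof. by rewrite !widen_ord_lift lift_perm_lift. Qed.

Lemma eps_lift_perm_max (t : 'S_n) : eps (lift_perm ord_max ord_max t) = eps t :> C.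
Proof. by rewrite /eps odd_lift_perm addbb. Qed.

Lemma eps_sX_lift_perm_max d (t : 'S_n) :
  eps_sX d (lift_perm ord_max ord_max t) = eps_sX (fun i => d (w i)) t :> C.
Proof.
rewrite !eps_sXE big_ord_recr /= [X in _ * X]big1 ?mulr1; last first.
  by move=> b _; rewrite ltnNge -ltnS ltn_ord.
apply: eq_bigr => a _; rewrite big_ord_recr /= lift_perm_id lift_perm_max_widen.
rewrite [(ord_max < _)%N]ltnNge leq_ord andbF mulr1.
by apply: eq_bigr => b _; rewrite !lift_perm_max_widen.
Qed.

Lemma permseq_lift_perm_max (X : 'I_n.+1 -> M) (t : 'S_n) :
  permseq X (lift_perm ord_max ord_max t) = rcons (permseq (fun i => X (w i)) t) (X ord_max).
Proof.
rewrite /permseq enum_ordSr map_rcons -map_comp lift_perm_id; congr rcons.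
by apply: eq_map => k /=; rewrite lift_perm_max_widen.
Qed.

Section Homogeneous.
Variables (d : 'I_n.+1 -> bool) (X : 'I_n.+1 -> M).
Hypothesis hX : forall i, homog (d i) (X i).

Lemma Pm_Bform :
  Pm d X = n.+1%:R * Bform (calP (fun i => d (w i)) (fun i => X (w i))) (X ord_max).
Proof.
rewrite /Pm /calP str_sum; under eq_bigr do rewrite strZ.
rewrite (sum_perm_rot_invariant (eps_sX_str_rot hX)) mulr_natl; congr (_ *+ _).
rewrite /Bform mulmx_suml str_sum; apply: eq_bigr => t _.
by rewrite -scalemxAl strZ eps_sX_lift_perm_max permseq_lift_perm_max mprod_rcons.
Qed.

Lemma Lm_Bform : ~~ odd n ->
  Lm d X = n.+1%:R * Bform (calA (fun i => d (w i)) (fun i => X (w i))) (X ord_max).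
Proof.
move=> even_n; rewrite /Lm /calA str_sum; under eq_bigr do rewrite strZ -mulrA.
rewrite sum_perm_rot_invariant ?mulr_natl; last first.
  by move=> s; rewrite epsM eps_rot_perm (negbTE even_n) mul1r eps_sX_str_rot.
congr (_ *+ _); rewrite /Bform mulmx_suml str_sum; apply: eq_bigr => t _.
rewrite -scalemxAl strZ eps_lift_perm_max eps_sX_lift_perm_max.
by rewrite permseq_lift_perm_max mprod_rcons mulrA.
Qed.

Lemma Lm_eq0 : odd n -> 2%:R != 0 :> C -> Lm d X = 0.
Proof.
move=> odd_n two_neq0; rewrite /Lm /calA str_sum; under eq_bigr do rewrite strZ -mulrA.
set S := \sum_s _; suff /eqP : S *+ 2 = 0.
  by rewrite -mulr_natr mulf_eq0 (negbTE two_neq0) orbF => /eqP.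
rewrite mulr2n {1}/S (reindex_inj (mulgI (rot_perm n))) -big_split /=.
by apply: big1 => s _; rewrite epsM eps_rot_perm odd_n (eps_sX_str_rot hX) mulN1r mulNr addNr.
Qed.

End Homogeneous.
End CyclicSupertrace.

Section Shapes.
Variables (C : fieldType) (p q : nat).
Local Notation M := 'M[C]_(p + q).
Local Notation sg b := ((-1 : C) ^+ (b : bool)).
Local Notation x0 := ((false, 0) : bool * M).

(* A shape reads a word of factors from [g]: [false] takes one factor, [true] takes the super
   bracket of the next two. *)
Fixpoint shape_mx (sh : seq bool) (g : nat -> bool * M) : M :=
  match sh with
  | [::] => 1%:M
  | false :: sh' => (g 0%N).2 *m shape_mx sh' (fun i => g i.+1)
  | true :: sh' =>
      sbr (g 0%N).1 (g 1%N).1 (g 0%N).2 (g 1%N).2 *m shape_mx sh' (fun i => g i.+2)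
  end.

Definition shape_size (sh : seq bool) : nat := size sh + count id sh.

Lemma shape_size_cons b sh : shape_size (b :: sh) = (b.+1 + shape_size sh)%N.
Proof. by rewrite /shape_size /=; lia. Qed.

Lemma shape_size_cat s1 s2 : shape_size (s1 ++ s2) = (shape_size s1 + shape_size s2)%N.
Proof. by rewrite /shape_size size_cat count_cat; lia. Qed.

Lemma shape_size_letters k : shape_size (nseq k false) = k.
Proof. by rewrite /shape_size size_nseq count_nseq mul0n addn0. Qed.

Lemma shape_size_brackets k : shape_size (nseq k true) = k.*2.
Proof. by rewrite /shape_size size_nseq count_nseq mul1n addnn. Qed.

Lemma eq_shape_mx sh g g' : (forall i, (i < shape_size sh)%N -> g i = g' i) ->
  shape_mx sh g = shape_mx sh g'.
Proof.
elim: sh g g' => [|b sh IH] g g' eq_g //.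
have lt_size i : (i < b.+1 + shape_size sh)%N -> g i = g' i.
  by move=> lt_i; apply: eq_g; rewrite shape_size_cons.
by case: b {eq_g} lt_size => lt_size /=; rewrite !lt_size //; congr (_ *m _);
  apply: IH => i lt_i; apply: lt_size.
Qed.

Lemma shape_mx_cat s1 s2 g :
  shape_mx (s1 ++ s2) g = shape_mx s1 g *m shape_mx s2 (fun i => g (shape_size s1 + i)%N).
Proof.
elim: s1 g => [|[] s1 IH] g /=; first by rewrite mul1mx.
- by rewrite IH mulmxA shape_size_cons.
- by rewrite IH mulmxA shape_size_cons.
Qed.

Lemma shape_mx_letters (L : seq (bool * M)) :
  shape_mx (nseq (size L) false) (nth x0 L) = mprod (map snd L).
Proof. by elim: L => //= x L ->. Qed.

Lemma brpairs_shape k (L : seq (bool * M)) : size L = k.*2 ->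
  mprod (brpairs L) = shape_mx (nseq k true) (nth x0 L).
Proof.
by elim: k L => [|k IH] [|[a A] [|[b B] L]] //=; rewrite doubleS => -[] /IH ->.
Qed.

Lemma brmixed_shape k j (L : seq (bool * M)) : size L = k.*2.+1 -> (j <= k)%N ->
  brmixed j L = shape_mx (nseq j true ++ false :: nseq (k - j) true) (nth x0 L).
Proof.
move=> size_L le_jk; rewrite shape_mx_cat /= shape_size_brackets /brmixed addn0 mulmxA.
congr (_ *m _ *m _).
- rewrite (@brpairs_shape j) ?size_take ?size_L; last by case: ltnP; lia.
  by apply: eq_shape_mx => i; rewrite shape_size_brackets => lt_i; rewrite nth_take.
- rewrite (@brpairs_shape (k - j)) ?size_drop ?size_L; last by lia.
  by apply: eq_shape_mx => i _; rewrite nth_drop addnS.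
Qed.

Lemma shape_mx_bracket sh1 sh2 (g g' : nat -> bool * M) (o := shape_size sh1) :
    (forall i, i != o -> i != o.+1 -> g' i = g i) -> g' o = g o.+1 -> g' o.+1 = g o ->
  shape_mx (sh1 ++ true :: sh2) g = shape_mx (sh1 ++ false :: false :: sh2) g
    - sg ((g o).1 && (g o.+1).1) *: shape_mx (sh1 ++ false :: false :: sh2) g'.
Proof.
move=> g'_out g'_o g'_o1; rewrite !shape_mx_cat /= !addn0 !addn1 g'_o g'_o1; subst o.
have -> : shape_mx sh1 g' = shape_mx sh1 g.
  by apply: eq_shape_mx => i lt_i; rewrite g'_out //; lia.
have -> : shape_mx sh2 (fun i => g' (shape_size sh1 + i.+2)%N)
        = shape_mx sh2 (fun i => g (shape_size sh1 + i.+2)%N).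
  by apply: eq_shape_mx => i _; rewrite g'_out //; lia.
by rewrite /sbr mulmxBl mulmxBr -!mulmxA -scalemxAl -scalemxAr -!mulmxA.
Qed.

End Shapes.

Section Alternation.
Variables (C : fieldType) (p q m : nat).
Local Notation M := 'M[C]_(p + q).
Local Notation sg b := ((-1 : C) ^+ (b : bool)).
Local Notation x0 := ((false, 0) : bool * M).
Variables (d : 'I_m -> bool) (X : 'I_m -> M).

Definition altsum (F : 'S_m -> M) : M := \sum_(s : 'S_m) (eps s * eps_sX d s) *: F s.

Lemma altsum_tperm_adj (o o' : 'I_m) (F : 'S_m -> M) : o' = o.+1 :> nat ->
  \sum_(s : 'S_m) (eps s * eps_sX d s) *: (sg (d (s o) && d (s o')) *: F (tperm o o' * s)%g)
  = - altsum F.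
Proof.
move=> o'E; have neq_oo' : o != o' by rewrite -val_eqE /= o'E neq_ltn ltnSn.
rewrite /altsum (reindex_inj (can_inj (tpermKg o o'))) /= -sumrN; apply: eq_bigr => s _.
rewrite tpermKg !permM tpermL tpermR epsM eps_tperm // eps_sXM eps_sX_tperm_adj //.
rewrite scalerA -scaleNr [d (s o') && _]andbC; congr (_ *: _).
by case: (_ && _); rewrite /= ?expr0 ?expr1; ring.
Qed.

Local Notation word s := (nth x0 (permseqd d X s)).

Lemma size_permseqd s : size (permseqd d X s) = m.
Proof. by rewrite size_map size_enum_ord. Qed.

Lemma nth_permseqd s (i : 'I_m) : word s i = (d (s i), X (s i)).
Proof. by rewrite (nth_map i) ?size_enum_ord // nth_ord_enum. Qed.

Lemma nth_permseqd_tperm s (o o' : 'I_m) (i : nat) : i != o -> i != o' ->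
  word (tperm o o' * s)%g i = word s i.
Proof.
case: (ltnP i m) => [lt_im | le_mi] ne_o ne_o'; last first.
  by rewrite !nth_default ?size_permseqd.
have -> : i = Ordinal lt_im by [].
by rewrite !nth_permseqd permM tpermD // -val_eqE eq_sym.
Qed.

Lemma altsum_bracket sh1 sh2 : shape_size (sh1 ++ true :: sh2) = m ->
  altsum (fun s => shape_mx (sh1 ++ true :: sh2) (word s))
  = 2 *: altsum (fun s => shape_mx (sh1 ++ false :: false :: sh2) (word s)).
Proof.
rewrite shape_size_cat shape_size_cons => size_m.
have lt_o : (shape_size sh1 < m)%N by lia.
have lt_o' : ((shape_size sh1).+1 < m)%N by lia.
pose o := Ordinal lt_o; pose o' := Ordinal lt_o'.
have word_o s : word s (shape_size sh1) = (d (s o), X (s o)) := nth_permseqd s o.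
have word_o' s : word s (shape_size sh1).+1 = (d (s o'), X (s o')) := nth_permseqd s o'.
pose F s := shape_mx (sh1 ++ false :: false :: sh2) (word s).
have expand s : shape_mx (sh1 ++ true :: sh2) (word s)
    = F s - sg (d (s o) && d (s o')) *: F (tperm o o' * s)%g.
  rewrite (@shape_mx_bracket _ _ _ sh1 sh2 _ (word (tperm o o' * s)%g)).
  - by rewrite !word_o !word_o'.
  - by move=> i; exact: (@nth_permseqd_tperm s o o' i).
  - by rewrite word_o word_o' permM tpermL.
  - by rewrite word_o' word_o permM tpermR.
rewrite /altsum; under eq_bigr do rewrite expand scalerBr.
by rewrite sumrB (altsum_tperm_adj _ (erefl : val o' = o.+1)) opprK scaler_nat mulr2n.
Qed.

Lemma altsum_shape sh : shape_size sh = m ->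
  altsum (fun s => shape_mx sh (word s)) = 2 ^+ count id sh *: calA d X.
Proof.
have nseq_cons k (b : bool) s : nseq k b ++ b :: s = nseq k.+1 b ++ s.
  by elim: k => //= k ->.
suff letters_shape k : forall sh, shape_size (nseq k false ++ sh) = m ->
    altsum (fun s => shape_mx (nseq k false ++ sh) (word s)) = 2 ^+ count id sh *: calA d X.
  exact: (letters_shape 0%N).
move=> {}sh; elim: sh k => [|[] sh IH] k.
- rewrite cats0 expr0 scale1r shape_size_letters => k_eq_m.
  apply: eq_bigr => s _; congr (_ *: _).
  have -> : k = size (permseqd d X s) by rewrite size_permseqd.
  by rewrite shape_mx_letters /permseqd /permseq -map_comp.
- move=> size_m; rewrite altsum_bracket // nseq_cons nseq_cons IH; last first.
    by rewrite -size_m !shape_size_cat shape_size_cons !shape_size_letters /=; lia.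
  by rewrite scalerA -exprS.
- by rewrite nseq_cons; apply: IH.
Qed.

End Alternation.

Section Brackets.
Variables (C : fieldType) (p q k : nat).
Local Notation M := 'M[C]_(p + q).

Lemma altsum_brpairs (d : 'I_k.*2 -> bool) (X : 'I_k.*2 -> M) :
  altsum d (fun s => mprod (brpairs (permseqd d X s))) = 2 ^+ k *: calA d X.
Proof.
have := altsum_shape d X (shape_size_brackets k); rewrite count_nseq mul1n => <-.
by apply: eq_bigr => s _; rewrite (@brpairs_shape _ _ _ k) ?size_permseqd.
Qed.

Lemma altsum_brmixed j (d : 'I_k.*2.+1 -> bool) (X : 'I_k.*2.+1 -> M) : (j <= k)%N ->
  altsum d (fun s => brmixed j (permseqd d X s)) = 2 ^+ k *: calA d X.
Proof.
move=> le_jk; have size_sh : shape_size (nseq j true ++ false :: nseq (k - j) true) = k.*2.+1.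
  by rewrite shape_size_cat shape_size_cons !shape_size_brackets -!addnn; lia.
have := altsum_shape d X size_sh; rewrite count_cat /= !count_nseq !mul1n subnKC // => <-.
by apply: eq_bigr => s _; rewrite (@brmixed_shape _ _ _ k) ?size_permseqd.
Qed.

End Brackets.

Theorem proposition4p1 (R : realType) (p q k : nat) (hk : (1 <= k)%N) :
  (* (a) *)
  (forall (d : 'I_k.*2.+1 -> bool) (X : 'I_k.*2.+1 -> 'M[R[i]]_(p + q)),
     (forall i, homog (d i) (X i)) ->
     Pm d X = (k.*2.+1)%:R * Bform (calP (fun i => d (widen_ord (leqnSn _) i))
                                         (fun i => X (widen_ord (leqnSn _) i)))
                                   (X ord_max)
  /\ Lm d X = (k.*2.+1)%:R * Bform (calA (fun i => d (widen_ord (leqnSn _) i))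
                                         (fun i => X (widen_ord (leqnSn _) i)))
                                   (X ord_max)) /\
  (forall (d : 'I_k.*2 -> bool) (X : 'I_k.*2 -> 'M[R[i]]_(p + q)),
     (forall i, homog (d i) (X i)) -> Lm d X = 0) /\
  (* (b) *)
  (forall (d : 'I_k.*2 -> bool) (X : 'I_k.*2 -> 'M[R[i]]_(p + q)),
     (forall i, homog (d i) (X i)) ->
     \sum_(s : 'S_k.*2) (eps s * eps_sX d s) *: mprod (brpairs (permseqd d X s))
       = 2 ^+ k *: calA d X) /\
  (* (c) *)
  (forall (j : nat), (j <= k)%N ->
   forall (d : 'I_k.*2.+1 -> bool) (X : 'I_k.*2.+1 -> 'M[R[i]]_(p + q)),
     (forall i, homog (d i) (X i)) ->
     \sum_(s : 'S_k.*2.+1) (eps s * eps_sX d s) *: brmixed j (permseqd d X s)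
       = 2 ^+ k *: calA d X).
Proof.
split; [|split; [|split]].
- move=> d X hX; split; first exact: Pm_Bform.
  by apply: (Lm_Bform hX); rewrite odd_double.
- case: k hk => // k' _ d X hX; apply: (@Lm_eq0 _ p q k'.*2.+1 d X hX).
    by rewrite /= odd_double.
  by rewrite Num.Theory.pnatr_eq0.
- by move=> d X _; exact: altsum_brpairs.
- by move=> j le_jk d X _; exact: altsum_brmixed.
Qed.
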